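(* Let $\mathcal F$ be a left $\mathcal D$-module. Then the pairing $\langle\sum_{u\in M}A_ux^{-u},\sum_{u\in M}B_ux^u\rangle=\sum_uB_uA_u$ induces an isomorphism $\mathcal K(\mathcal F)\cong\mathrm{Hom}_{\mathcal D}(\mathcal W,\mathcal F)$.
   Context: Let $A=\{\mathbf a_1,\dots,\mathbf a_m\}\subseteq\mathbb Z^n$ be linearly independent over $\mathbb R$, $\mathbf a_0\in\mathbb Z^n$, and $\ell_0,\dots,\ell_m$ positive integers with gcd $1$, $\ell_0\mathbf a_0=\sum_{j=1}^m\ell_j\mathbf a_j$, $\ell_0=\sum_{j=1}^m\ell_j$. Write $\mathbf a_j=(a_{1j},\dots,a_{nj})$ for $j=0,\dots,m$. Let $f_\lambda=\sum_{j=1}^m\ell_jx^{\mathbf a_j}-\ell_0\lambda x^{\mathbf a_0}$. Let $V$ be the real span of $A$, $V_{\mathbb Z}=V\cap\mathbb Z^n$, $C(A)$ the real cone generated by $A$, $M=V_{\mathbb Z}\cap C(A)$. Let $S$ be the $\mathbb C[\lambda]$-span of $\{x^u:u\in M\}$, $D_i=x_i\partial/\partial x_i+x_i\partial f_\lambda/\partial x_i$ ($i=1,\dots,n$), $D_\lambda=\partial/\partial\lambda-\ell_0x^{\mathbf a_0}$, $\mathcal D=\mathbb C[\lambda]\langle\partial_\lambda\rangle$, and $\mathcal W=S/\sum_iD_iS$, a left $\mathcal D$-module with $\partial_\lambda$ acting as $D_\lambda$. For a left $\mathcal D$-module $\mathcal F$, let $R(\mathcal F)$ be the set of formal sums $\xi=\sum_{u\in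 M}A_ux^{-u}$ with $A_u\in\mathcal F$, and define $D_i^*(\xi)=\sum_{v\in M}\big(v_iA_v-\ell_0a_{i0}\lambda A_{v+\mathbf a_0}+\sum_{j=1}^m\ell_ja_{ij}A_{v+\mathbf a_j}\big)x^{-v}$ (this is $\gamma_-\circ(-x_i\partial/\partial x_i-\ell_0a_{i0}\lambda x^{\mathbf a_0}+\sum_j\ell_ja_{ij}x^{\mathbf a_j})$, where $\gamma_-$ discards monomials $x^{-u}$ with $u\notin M$). Let $\mathcal K(\mathcal F)$ be the set of $\xi=\sum_{u\in M}A_ux^{-u}\in R(\mathcal F)$ with $D_i^*(\xi)=0$ for $i=1,\dots,n$ and $\partial_\lambda(A_u)=-\ell_0A_{u+\mathbf a_0}$ for all $u\in M$. *)

From HB Require Import structures.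
From mathcomp Require Import all_boot all_order all_algebra.
From mathcomp Require Import finmap.
From mathcomp Require Import monalg.
From mathcomp Require Import Rstruct complex.
From Stdlib Require Import ClassicalEpsilon.

Set Implicit Arguments.
Unset Strict Implicit.
Unset Printing Implicit Defensive.

Import Order.TTheory GRing.Theory Num.Theory.
Local Open Scope ring_scope.

Definition RR : rcfType := Rdefinitions.R.
Definition CC : fieldType := (RR[i])%type.

Notation Cl := {poly CC}.

(* Vectors in Z^n are row vectors 'rV[int]_n; the family A = {a_1..a_m}
   is a : 'I_m -> 'rV[int]_n, so a_{ij} = a j 0 i.                       *)

Definition toR (n : nat) (u : 'rV[int]_n) : 'rV[RR]_n := map_mx intr u.

Definition in_span (n m : nat) (a : 'I_m -> 'rV[int]_n) (u : 'rV[int]_n) : Prop :=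
  exists c : 'I_m -> RR, toR u = \sum_(j < m) c j *: toR (a j).

Definition in_cone (n m : nat) (a : 'I_m -> 'rV[int]_n) (u : 'rV[int]_n) : Prop :=
  exists c : 'I_m -> RR, (forall j, 0 <= c j) /\ toR u = \sum_(j < m) c j *: toR (a j).

(* M = V_Z \cap C(A)  (u integral is automatic from the type) *)
Definition inM (n m : nat) (a : 'I_m -> 'rV[int]_n) (u : 'rV[int]_n) : Prop :=
  in_span a u /\ in_cone a u.

Definition inMb (n m : nat) (a : 'I_m -> 'rV[int]_n) (u : 'rV[int]_n) : bool :=
  if excluded_middle_informative (inM a u) then true else false.

Definition Mt (n m : nat) (a : 'I_m -> 'rV[int]_n) : Type :=
  {u : 'rV[int]_n | inMb a u}.

(* v |-> v + w inside M (defaults to v if v + w were not in M; for the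
   shifts used below, v + a_j and v + a_0, one always stays in M). *)
Definition shiftM (n m : nat) (a : 'I_m -> 'rV[int]_n) (v : Mt a)
  (w : 'rV[int]_n) : Mt a := insubd v (val v + w).

(* S = the C[lambda]-span of {x^u : u in M}: the free C[lambda]-module on M *)
Definition S (n m : nat) (a : 'I_m -> 'rV[int]_n) : Type := {malg Cl[Mt a]}.

(* D_i applied to the basis element x^u:
   x_i d/dx_i (x^u) + x_i (d f_lambda / d x_i) x^u
   = u_i x^u + sum_j l_j a_{ij} x^{u+a_j} - l_0 a_{i0} lambda x^{u+a_0} *)
Definition Dbasis (n m : nat) (a : 'I_m -> 'rV[int]_n) (a0 : 'rV[int]_n)
  (l : 'I_m -> nat) (l0 : nat) (i : 'I_n) (u : Mt a) : S a :=
  ((val u) 0 i)%:~R *: << u >>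
  + \sum_(j < m) ((l j)%:R * (a j 0 i)%:~R) *: << shiftM u (a j) >>
  - (l0%:R * (a0 0 i)%:~R * 'X) *: << shiftM u a0 >>.

Definition Dop (n m : nat) (a : 'I_m -> 'rV[int]_n) (a0 : 'rV[int]_n)
  (l : 'I_m -> nat) (l0 : nat) (i : 'I_n) (s : S a) : S a :=
  \sum_(u <- msupp s) s@_u *: Dbasis a0 l l0 i u.

(* D_lambda = d/dlambda - l_0 x^{a_0} on S *)
Definition Dlam (n m : nat) (a : 'I_m -> 'rV[int]_n) (a0 : 'rV[int]_n)
  (l0 : nat) (s : S a) : S a :=
  \sum_(u <- msupp s)
     ((s@_u)^`() *: << u >> - (l0%:R * s@_u) *: << shiftM u a0 >>).

(* Left D-modules, D = C[lambda]<d_lambda>: a C[lambda]-module F together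
   with the action dF of d_lambda, additive and satisfying the Weyl
   relation d_lambda p = p d_lambda + p' (Leibniz rule). *)
Definition isDmod (F : lmodType Cl) (dF : F -> F) : Prop :=
  (forall f g : F, dF (f + g) = dF f + dF g) /\
  (forall (p : Cl) (f : F), dF (p *: f) = p^`() *: f + p *: dF f).

(* R(F): formal sums xi = sum_{u in M} A_u x^{-u}, i.e. families M -> F *)
Definition RF (n m : nat) (a : 'I_m -> 'rV[int]_n) (F : lmodType Cl) : Type :=
  Mt a -> F.

Definition Dstar (n m : nat) (a : 'I_m -> 'rV[int]_n) (a0 : 'rV[int]_n)
  (l : 'I_m -> nat) (l0 : nat) (F : lmodType Cl) (i : 'I_n)
  (xi : RF a F) : RF a F :=
  fun v => ((val v) 0 i)%:~R *: xi v
           - (l0%:R * (a0 0 i)%:~R * 'X) *: xi (shiftM v a0)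
           + \sum_(j < m) ((l j)%:R * (a j 0 i)%:~R) *: xi (shiftM v (a j)).

Definition inK (n m : nat) (a : 'I_m -> 'rV[int]_n) (a0 : 'rV[int]_n)
  (l : 'I_m -> nat) (l0 : nat) (F : lmodType Cl) (dF : F -> F)
  (xi : RF a F) : Prop :=
  (forall i v, Dstar a0 l l0 i xi v = 0) /\
  (forall u, dF (xi u) = - (l0%:R *: xi (shiftM u a0))).

Definition pairing (n m : nat) (a : 'I_m -> 'rV[int]_n) (F : lmodType Cl)
  (xi : RF a F) (s : S a) : F :=
  \sum_(u <- msupp s) s@_u *: xi u.

(* Hom_D(W, F), W = S / sum_i D_i S, via the universal property of the
   quotient: C[lambda]-linear maps S -> F vanishing on every D_i S and
   intertwining D_lambda (acting on S, hence on W) with d_lambda on F. *)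
Definition isDHom (n m : nat) (a : 'I_m -> 'rV[int]_n) (a0 : 'rV[int]_n)
  (l : 'I_m -> nat) (l0 : nat) (F : lmodType Cl) (dF : F -> F)
  (phi : S a -> F) : Prop :=
  [/\ (forall (p : Cl) (s t : S a), phi (p *: s + t) = p *: phi s + phi t),
      (forall i (s : S a), phi (Dop a0 l l0 i s) = 0) &
      (forall s : S a, phi (Dlam a0 l0 s) = dF (phi s))].

From HB Require Import structures.
From mathcomp Require Import all_boot all_order all_algebra.
From mathcomp Require Import finmap monalg Rstruct complex.

Import GRing.Theory Num.Theory.
Local Open Scope ring_scope.

(* S is the free C[lambda]-module on M, so C[lambda]-linear maps S -> F are
   exactly the families xi = (xi_u)_(u in M) of F: phi |-> (phi x^u)_u, with
   inverse the pairing. Under this correspondence phi (D_i s) = <D_i^* xi, s>,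
   so phi kills every D_i S iff D_i^* xi = 0. By the Leibniz rule in F, phi
   intertwines D_lambda with d_lambda as soon as it does on monomials, i.e.
   iff d_lambda xi_u = - l_0 xi_(u + a_0). *)

Section FreeModuleDuality.
Context {K : choiceType} {F : lmodType Cl}.
Implicit Types (xi eta : K -> F) (s : {malg Cl[K]}) (k : K).

(* At [K := Mt a] this is [pairing]. *)
Definition malg_pair xi s : F := \sum_(k <- msupp s) s@_k *: xi k.

Lemma malg_pairEw xi {s} {d : {fset K}} : (msupp s `<=` d)%fset ->
  malg_pair xi s = \sum_(k <- d) s@_k *: xi k.
Proof.
move=> le_sd; rewrite /malg_pair (big_fset_incl _ le_sd) //= => k _.
by move/mcoeff_outdom ->; rewrite scale0r.
Qed.

Lemma malg_pair_is_linear xi : linear (malg_pair xi).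
Proof.
move=> p s t; set d := (msupp s `|` msupp t)%fset.
have le_pst : (msupp (p *: s + t) `<=` d)%fset.
  by apply: fsubset_trans (msuppD_le _ _) _; apply/fsetSU/msuppZ_le.
rewrite (malg_pairEw _ le_pst) (malg_pairEw _ (fsubsetUl _ (msupp t))).
rewrite (malg_pairEw _ (fsubsetUr (msupp s) _)) scaler_sumr -big_split /=.
by apply: eq_bigr => k _; rewrite mcoeffD mcoeffZ scalerDl scalerA.
Qed.

HB.instance Definition _ xi := GRing.isLinear.Build Cl {malg Cl[K]} F *:%R
  (malg_pair xi) (malg_pair_is_linear xi).

Lemma malgUZ (c : Cl) k : << c *g k >> = c *: << k >> :> {malg Cl[K]}.
Proof. by apply/malgP => k'; rewrite mcoeffZ !mcoeffU mulr_natr. Qed.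

Lemma malg_pairU xi k : malg_pair xi << k >> = xi k.
Proof.
by rewrite /malg_pair msuppU oner_eq0 big_seq_fset1 mcoeffUU scale1r.
Qed.

Lemma malg_pairZU xi (c : Cl) k : malg_pair xi (c *: << k >>) = c *: xi k.
Proof. by rewrite linearZ /= malg_pairU. Qed.

Lemma malg_pairDZ (p : Cl) xi1 xi2 s :
  malg_pair (fun k => p *: xi1 k + xi2 k) s
  = p *: malg_pair xi1 s + malg_pair xi2 s.
Proof.
rewrite /malg_pair scaler_sumr -big_split /=.
by apply: eq_bigr => k _; rewrite scalerDr !scalerA mulrC.
Qed.

Lemma malg_pair_comp xi (g : K -> {malg Cl[K]}) s :
  malg_pair xi (\sum_(k <- msupp s) s@_k *: g k)
  = malg_pair (malg_pair xi \o g) s.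
Proof. by rewrite linear_sum; apply: eq_bigr => k _; rewrite linearZ. Qed.

Lemma malg_pair_eq0 eta :
  (forall s, malg_pair eta s = 0) <-> (forall k, eta k = 0).
Proof.
split=> [eta0 k | eta0 s]; first by rewrite -(malg_pairU eta) eta0.
by apply: big1 => k _; rewrite eta0 scaler0.
Qed.

Lemma linear_malg_pairE {phi : {malg Cl[K]} -> F} : linear phi ->
  phi =1 malg_pair (fun k => phi << k >>).
Proof.
move=> lin_phi s.
pose phiL : {linear {malg Cl[K]} -> F} :=
  HB.pack phi (GRing.isLinear.Build _ _ _ _ phi lin_phi).
rewrite -[phi s]/(phiL s) {1}(monalgE s) linear_sum.
by apply: eq_bigr => k _; rewrite malgUZ linearZ.
Qed.

Definition deriv_shift (c0 : Cl) (sh : K -> K) s : {malg Cl[K]} :=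
  \sum_(k <- msupp s) ((s@_k)^`() *: << k >> - (c0 * s@_k) *: << sh k >>).

Lemma deriv_shiftU c0 sh k : deriv_shift c0 sh << k >> = - (c0 *: << sh k >>).
Proof.
rewrite /deriv_shift msuppU oner_eq0 big_seq_fset1 mcoeffUU.
by rewrite derivC scale0r sub0r mulr1.
Qed.

Context {dF : F -> F}.
Hypothesis dF_Dmod : isDmod dF.

Lemma malg_pair_deriv_shiftP (c0 : Cl) sh xi :
  (forall s, malg_pair xi (deriv_shift c0 sh s) = dF (malg_pair xi s))
  <-> (forall k, dF (xi k) = - (c0 *: xi (sh k))).
Proof.
have [dFD dFZ] := dF_Dmod.
split=> [xi_dF k | dF_xi s].
  rewrite -[xi k](malg_pairU xi) -xi_dF deriv_shiftU.
  by rewrite linearN linearZ /= malg_pairU.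
have dF0 : dF 0 = 0 by apply: (addrI (dF 0)); rewrite -dFD !addr0.
rewrite linear_sum /malg_pair (big_morph dF dFD dF0).
apply: eq_bigr => k _.
by rewrite linearB !linearZ /= !malg_pairU dFZ dF_xi !scalerN scalerA mulrC.
Qed.

End FreeModuleDuality.

Section GKZDuality.
Context {n m : nat} {a : 'I_m -> 'rV[int]_n} {a0 : 'rV[int]_n}.
Context {l : 'I_m -> nat} {l0 : nat} {F : lmodType Cl} {dF : F -> F}.
Implicit Types (xi : RF a F) (phi psi : S a -> F).

Lemma malg_pair_Dbasis xi i v :
  malg_pair xi (Dbasis a0 l l0 i v) = Dstar a0 l l0 i xi v.
Proof.
rewrite /Dbasis /Dstar linearB linearD /= addrAC; congr (_ - _ + _).
- exact: malg_pairZU.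
- exact: malg_pairZU.
by rewrite linear_sum; apply: eq_bigr => j _; apply: malg_pairZU.
Qed.

Lemma malg_pair_Dop xi i s :
  malg_pair xi (Dop a0 l l0 i s) = malg_pair (Dstar a0 l l0 i xi) s.
Proof.
rewrite /Dop malg_pair_comp; apply: eq_bigr => u _.
by rewrite /= malg_pair_Dbasis.
Qed.

Lemma isDHom_malg_pairP xi : isDmod dF ->
  isDHom a0 l l0 dF (malg_pair xi) <-> inK a0 l l0 dF xi.
Proof.
move=> dF_Dmod.
(* [Dlam a0 l0] unfolds to [deriv_shift l0%:R (fun u => shiftM u a0)]. *)
have DlamP := malg_pair_deriv_shiftP dF_Dmod l0%:R (fun u => shiftM u a0) xi.
have DopP i : (forall s, malg_pair xi (Dop a0 l l0 i s) = 0)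
              <-> (forall v, Dstar a0 l l0 i xi v = 0).
  apply: iff_trans (malg_pair_eq0 _).
  by split=> Dop0 s; [rewrite -malg_pair_Dop | rewrite malg_pair_Dop].
split=> [[_ Dop0 Dlam_dF] | [Dstar0 dF_xi]].
  by split=> [i|]; [exact: (DopP i).1 (Dop0 i) | exact: DlamP.1 Dlam_dF].
split; first exact: malg_pair_is_linear.
  by move=> i; exact: (DopP i).2 (Dstar0 i).
exact: DlamP.2 dF_xi.
Qed.

Lemma eq_isDHom phi psi : phi =1 psi ->
  isDHom a0 l l0 dF phi -> isDHom a0 l l0 dF psi.
Proof.
move=> eq_phi [lin_phi Dop0 Dlam_dF]; split=> [p s t|i s|s]; rewrite -!eq_phi.
- exact: lin_phi.
- exact: Dop0.
- exact: Dlam_dF.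
Qed.

End GKZDuality.

Theorem proposition2p6 (n m : nat) (a : 'I_m -> 'rV[int]_n) (a0 : 'rV[int]_n)
  (l : 'I_m -> nat) (l0 : nat) :
  row_free (\matrix_(j < m) toR (a j)) ->
  (forall j, 0 < l j)%N -> (0 < l0)%N ->
  gcdn l0 (\big[gcdn/0%N]_(j < m) l j) = 1%N ->
  a0 *+ l0 = \sum_(j < m) a j *+ l j ->
  l0 = (\sum_(j < m) l j)%N ->
  forall (F : lmodType Cl) (dF : F -> F), isDmod dF ->
  [/\ (* the pairing sends K(F) into Hom_D(W, F) *)
      (forall xi : RF a F, inK a0 l l0 dF xi -> isDHom a0 l l0 dF (pairing xi)),
      (* the induced map is C-linear *)
      (forall (c : CC) (xi1 xi2 : RF a F) (s : S a),
         pairing (fun u => c%:P *: xi1 u + xi2 u) s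
         = c%:P *: pairing xi1 s + pairing xi2 s),
      (* injective *)
      (forall xi1 xi2 : RF a F, inK a0 l l0 dF xi1 -> inK a0 l l0 dF xi2 ->
         (forall s, pairing xi1 s = pairing xi2 s) -> forall u, xi1 u = xi2 u) &
      (* surjective *)
      (forall phi : S a -> F, isDHom a0 l l0 dF phi ->
         exists xi : RF a F, inK a0 l l0 dF xi /\ forall s, phi s = pairing xi s)].
Proof.
move=> _ _ _ _ _ _ F dF dF_Dmod; split.
- by move=> xi /(isDHom_malg_pairP _ dF_Dmod).
- by move=> c xi1 xi2 s; apply: malg_pairDZ.
- move=> xi1 xi2 _ _ eq_pair u.
  by rewrite -(malg_pairU xi1) -(malg_pairU xi2); apply: eq_pair.
move=> phi phi_DHom; exists (fun u => phi << u >>).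
have [lin_phi _ _] := phi_DHom; have phiE := linear_malg_pairE lin_phi.
split; last exact: phiE.
by apply/(isDHom_malg_pairP _ dF_Dmod); apply: eq_isDHom phiE phi_DHom.
Qed.
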